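(* Let $k\ge 2$ be an integer, $\varepsilon=\exp(2\pi i/k)$, and let $P$ be the complex activation function of order $k$ described in the context. Let $T\subset\mathbb{BC}^n$ be bounded, i.e. $T=T_1\mathbf e_1+T_2\mathbf e_2$ with $T_1,T_2\subset\mathbb C^n$ bounded. Let $f:T\to\mathbb{BC}$ be a $\mathbb{BC}$-threshold function having $(\mathsf w_0,0,\dots,0)\in\mathbb{BC}^{n+1}$ as a weighting vector. Then there exist $\mathsf w_0'\in\mathbb{BC}$ and $\delta>0$ such that $(\mathsf w_0',\mathsf w_1,\dots,\mathsf w_n)$ is a weighting vector of $f$ for every $\mathsf w_1,\dots,\mathsf w_n\in\mathbb{BC}$ satisfying, for each $\ell=1,\dots,n$, writing $\mathsf w_\ell=w_{\ell_1}\mathbf e_1+w_{\ell_2}\mathbf e_2$: $|w_{\ell_1}|<\delta$ and $|w_{\ell_2}|<\delta$ (equivalently, $\mathsf w_\ell$ has hyperbolic modulus bounded by $\delta\mathbf e_1+\delta\mathbf e_2$).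
   Context: Bicomplex numbers: $\mathbb{BC}=\{z_1+\mathbf j z_2: z_1,z_2\in\mathbb C\}$ where $\mathbb C=\mathbb C(\mathbf i)$, $\mathbf i,\mathbf j$ are commuting units with $\mathbf i^2=\mathbf j^2=-1$. Put $\mathbf e_1=\frac{1+\mathbf i\mathbf j}{2}$, $\mathbf e_2=\frac{1-\mathbf i\mathbf j}{2}$; then $\mathbf e_1^2=\mathbf e_1$, $\mathbf e_2^2=\mathbf e_2$, $\mathbf e_1\mathbf e_2=0$, $\mathbf e_1+\mathbf e_2=1$, and every $Z=z_1+\mathbf jz_2$ is uniquely $Z=\lambda_1\mathbf e_1+\lambda_2\mathbf e_2$ with $\lambda_1=z_1-\mathbf iz_2$, $\lambda_2=z_1+\mathbf iz_2\in\mathbb C$; addition and multiplication are componentwise in this representation. Vectors in $\mathbb{BC}^n$ are likewise written $X_1\mathbf e_1+X_2\mathbf e_2$ with $X_1,X_2\in\mathbb C^n$. Complex activation function: for $z\in\mathbb C\setminus\{0\}$ with argument $\arg z\in[0,2\pi)$, $P(z)=\varepsilon^{l}$ whenever $\frac{2\pi l}{k}\le \arg z<\frac{2\pi(l+1)}{k}$, $l\in\{0,\dots,k-1\}$. Bicomplex activation function: for $\mathsf w_0=w_{0_1}\mathbf e_1+w_{0_2}\mathbf e_2$, $\mathsf w_\ell=w_{\ell_1}\mathbf e_1+w_{\ell_2}\mathbf e_2$, $\mathsf x_\ell=x_{\ell_1}\mathbf e_1+x_{\ell_2}\mathbf e_2$ ($\ell=1,\dots,n$), $\mathcal P(\mathsf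 w_0+\sum_{\ell=1}^n\mathsf w_\ell\mathsf x_\ell):=P(w_{0_1}+\sum_\ell w_{\ell_1}x_{\ell_1})\mathbf e_1+P(w_{0_2}+\sum_\ell w_{\ell_2}x_{\ell_2})\mathbf e_2$. A function $f:T\to\mathbb{BC}$ ($T\subset\mathbb{BC}^n$) is a $\mathbb{BC}$-threshold function if there is a weighting vector $\mathsf W=(\mathsf w_0,\dots,\mathsf w_n)\in\mathbb{BC}^{n+1}$ with $f(\mathsf x_1,\dots,\mathsf x_n)=\mathcal P(\mathsf w_0+\sum_{\ell=1}^n\mathsf w_\ell\mathsf x_\ell)$ for all $(\mathsf x_1,\dots,\mathsf x_n)\in T$. *)

From mathcomp Require Import all_boot all_order all_algebra.
From mathcomp Require Import complex.
From mathcomp Require Import all_classical all_reals all_analysis.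
Set Implicit Arguments. Unset Strict Implicit. Unset Printing Implicit Defensive.
Import Order.TTheory GRing.Theory Num.Theory.
Local Open Scope ring_scope.
Local Open Scope complex_scope.

Section Bicomplex.
Variable R : realType.
Local Notation C := R[i].

(* A bicomplex number z1 + j z2 is represented by the pair (z1, z2). *)
Definition BC := (C * C)%type.

Definition bc_add (Z W : BC) : BC := (Z.1 + W.1, Z.2 + W.2).
(* (z1 + j z2)(w1 + j w2) = (z1 w1 - z2 w2) + j (z1 w2 + z2 w1), since j^2 = -1 *)
Definition bc_mul (Z W : BC) : BC :=
  (Z.1 * W.1 - Z.2 * W.2, Z.1 * W.2 + Z.2 * W.1).
Definition bc_zero : BC := (0, 0).

(* idempotent components: Z = lambda1 e1 + lambda2 e2 *)
Definition comp1 (Z : BC) : C := Z.1 - 'i * Z.2.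
Definition comp2 (Z : BC) : C := Z.1 + 'i * Z.2.

(* the bicomplex number l1 e1 + l2 e2, with e1 = (1 + ij)/2, e2 = (1 - ij)/2 *)
Definition bc_of_idem (l1 l2 : C) : BC :=
  ((l1 + l2) / 2%:R, 'i * (l1 - l2) / 2%:R).

Definition is_arg (z : C) (theta : R) : Prop :=
  0 <= theta < 2%:R * pi /\ z = `|z| * (cos theta +i* sin theta).

Definition eps (k : nat) : C :=
  cos (2%:R * pi / k%:R) +i* sin (2%:R * pi / k%:R).

(* graph of the complex activation function P of order k (defined for z <> 0) *)
Definition P_rel (k : nat) (z v : C) : Prop :=
  z != 0 /\ exists (theta : R) (l : nat), (l < k)%N /\ is_arg z theta /\
    2%:R * pi * l%:R / k%:R <= theta < 2%:R * pi * (l.+1)%:R / k%:R /\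
    v = eps k ^+ l.

Definition calP_rel (k : nat) (Z V : BC) : Prop :=
  exists p1 p2 : C, P_rel k (comp1 Z) p1 /\ P_rel k (comp2 Z) p2 /\
    V = bc_of_idem p1 p2.

Definition weighted_sum (n : nat) (w0 : BC) (w x : 'I_n -> BC) : BC :=
  bc_add w0 (\big[bc_add/bc_zero]_(l < n) bc_mul (w l) (x l)).

Definition is_weighting_vector (k n : nat) (T : ('I_n -> BC) -> Prop)
    (f : ('I_n -> BC) -> BC) (w0 : BC) (w : 'I_n -> BC) : Prop :=
  forall x, T x -> calP_rel k (weighted_sum w0 w x) (f x).

Definition bc_bounded (n : nat) (T : ('I_n -> BC) -> Prop) : Prop :=
  exists M : R, forall x, T x -> forall l : 'I_n,
    `|comp1 (x l)| <= M%:C /\ `|comp2 (x l)| <= M%:C.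

End Bicomplex.

(* With all weights zero, f is constant on T, equal to P(l1) e1 + P(l2) e2
   where l1, l2 are the idempotent components of w0.  Each value eps^l of P
   is taken on a whole open disc around the midpoint of the l-th sector of
   the unit circle, of a radius depending only on k.  Choosing w0' with these
   midpoints as idempotent components, the perturbation sum_l w_l x_l stays
   inside both discs once the weights are small enough, because T is bounded
   and everything is computed componentwise in the idempotent basis. *)

From mathcomp Require Import all_boot all_order all_algebra.
From mathcomp Require Import complex.
From mathcomp Require Import all_classical all_reals all_analysis.
From mathcomp Require Import ring lra.
Set Implicit Arguments. Unset Strict Implicit. Unset Printing Implicit Defensive.
Import Order.TTheory GRing.Theory Num.Theory.
Local Open Scope ring_scope.
Local Open Scope complex_scope.

Section Polar.
Variable R : realType.

Definition cis (t : R) : R[i] := cos t +i* sin t.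

Lemma cisD (s t : R) : cis (s + t) = cis s * cis t.
Proof. by rewrite /cis cosD sinD; congr (_ +i* _); ring. Qed.

Lemma cis0 : cis 0 = 1.
Proof. by rewrite /cis cos0 sin0. Qed.

Lemma normr_cis (t : R) : `|cis t| = 1.
Proof. by rewrite normc_def /= cos2Dsin2 sqrtr1. Qed.

Lemma cos_eq1_0_2pi (d : R) : 0 <= d < 2%:R * pi -> cos d = 1 -> d = 0.
Proof.
move=> /andP[d_ge0 d_lt2pi] cos_d.
have sin_half : sin (d / 2) = 0.
  have : sin (d / 2) ^+ 2 = 0.
    have d_twice : d = (d / 2) *+ 2 by rewrite mulr2n; lra.
    by move: cos_d; rewrite {1}d_twice cos_mulr2n cos2sin2 mulr2n => ?; lra.
  by move/eqP; rewrite sqrf_eq0 => /eqP.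
apply/eqP; rewrite eq_le d_ge0 andbT leNgt; apply/negP => d_gt0.
have : 0 < sin (d / 2) by apply: sin_gt0_pi; apply/andP; split; lra.
by rewrite sin_half ltxx.
Qed.

Lemma cis_inj_0_2pi (t1 t2 : R) : 0 <= t1 < 2%:R * pi -> 0 <= t2 < 2%:R * pi ->
  cis t1 = cis t2 -> t1 = t2.
Proof.
wlog t12 : t1 t2 / t1 <= t2.
  move=> wlog_le h1 h2 e; have [le12|lt21] := leP t1 t2; first exact: wlog_le.
  by apply/esym/wlog_le => //; exact: ltW.
move=> /andP[t1_ge0 _] /andP[_ t2_lt] [c12 s12].
suff : t2 - t1 = 0 by move/eqP; rewrite subr_eq0 => /eqP.
apply: cos_eq1_0_2pi; last by rewrite cosB c12 s12 -!expr2 cos2Dsin2.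
by apply/andP; split; lra.
Qed.

Lemma polar_Re_gt0 (a b : R) : 0 < a -> a +i* b = `|a +i* b| * cis (atan (b / a)).
Proof.
move=> a_gt0; set t := b / a.
have r_gt0 : 0 < Num.sqrt (1 + t ^+ 2) by rewrite sqrtr_gt0; nra.
have normE : `|a +i* b| = (a * Num.sqrt (1 + t ^+ 2))%:C.
  rewrite normc_def /=; congr (_%:C).
  have -> : a ^+ 2 + b ^+ 2 = a ^+ 2 * (1 + t ^+ 2) by rewrite /t; field; rewrite gt_eqF.
  by rewrite sqrtrM ?sqr_ge0 // sqrtr_sqr ger0_norm // ltW.
have sinE : sin (atan t) = t * cos (atan t).
  by rewrite -{2}(atanK t) /tan divfK // cos_atan invr_eq0 gt_eqF.
rewrite normE /cis sinE cos_atan; apply/eqP; rewrite eq_complex /= !mul0r subr0 addr0.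
by apply/andP; split; apply/eqP; rewrite /t; field; rewrite !gt_eqF.
Qed.

Lemma normc_lt (a b r : R) : 0 < r -> (`|a +i* b| < r%:C) = (a ^+ 2 + b ^+ 2 < r ^+ 2).
Proof.
move=> r_gt0; rewrite normc_def ltcR /=.
by rewrite -{1}(ger0_norm (ltW r_gt0)) -sqrtr_sqr ltr_sqrt // exprn_gt0.
Qed.

Lemma near_one_in_cone (s a b : R) : 0 < s ->
  (a - 1) ^+ 2 + b ^+ 2 < (s / (1 + s)) ^+ 2 -> 0 < a /\ `|b| <= s * a.
Proof.
move=> s_gt0; set r := s / (1 + s) => near.
have r_gt0 : 0 < r by rewrite divr_gt0 // addr_gt0.
have rE : r * (1 + s) = s by rewrite divfK // gt_eqF // addr_gt0.
have [a_sq b_sq] := (sqr_ge0 (a - 1), sqr_ge0 b).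
have a_near : `|a - 1| < r by rewrite -ltr_sqr ?real_normK ?num_real // ?nnegrE ?ltW //; lra.
have b_small : `|b| < r by rewrite -ltr_sqr ?real_normK ?num_real // ?nnegrE ?ltW //; lra.
move: a_near; rewrite ltr_norml => /andP[a_lo _].
split; first by nra.
by apply: ltW; apply: (lt_le_trans b_small); nra.
Qed.

End Polar.

Section Activation.
Variable R : realType.

Lemma is_arg_unique (z : R[i]) (t1 t2 : R) : z != 0 -> is_arg z t1 -> is_arg z t2 -> t1 = t2.
Proof.
move=> z_neq0 [t1_range z1] [t2_range z2].
apply: cis_inj_0_2pi => //; apply: (@mulfI _ `|z|); first by rewrite normr_eq0.
by rewrite /cis -z1 -z2.
Qed.

Lemma sector_index_unique (k l l' : nat) (t : R) : (0 < k)%N ->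
  2%:R * pi * l%:R / k%:R <= t < 2%:R * pi * l.+1%:R / k%:R ->
  2%:R * pi * l'%:R / k%:R <= t < 2%:R * pi * l'.+1%:R / k%:R -> l = l'.
Proof.
move=> k_gt0.
have width_gt0 : 0 < 2%:R * pi / k%:R :> R by rewrite divr_gt0 ?mulr_gt0 ?pi_gt0 ?ltr0n.
have sector_le m m' : 2%:R * pi * m%:R / k%:R <= t -> t < 2%:R * pi * m'.+1%:R / k%:R ->
    (m <= m')%N.
  move=> /le_lt_trans lt_m /lt_m; rewrite -!mulrA ![_%:R * _^-1]mulrC !mulrA.
  by rewrite ltr_pM2l // ltr_nat ltnS.
move=> /andP[lo hi] /andP[lo' hi'].
by apply/eqP; rewrite eqn_leq (sector_le _ _ lo hi') (sector_le _ _ lo' hi).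
Qed.

Lemma P_rel_functional (k : nat) (z p1 p2 : R[i]) : (0 < k)%N ->
  P_rel k z p1 -> P_rel k z p2 -> p1 = p2.
Proof.
move=> k_gt0 [z_neq0 [t1 [l1 [_ [arg1 [sec1 ->]]]]]] [_ [t2 [l2 [_ [arg2 [sec2 ->]]]]]].
move: sec2; rewrite -(is_arg_unique z_neq0 arg1 arg2) => sec2.
by rewrite (sector_index_unique k_gt0 sec1 sec2).
Qed.

End Activation.

Section Sectors.
Variables (R : realType) (k : nat).
Hypothesis k_ge2 : (2 <= k)%N.

Definition sector_center (l : nat) : R[i] := cis ((2 * l%:R + 1) * (pi / k%:R)).
Definition sector_slope : R := tan (pi / k%:R / 2).
(* The disc of this radius around 1 lies in the cone |Im| <= sector_slope * Re,
   whose half-angle is half the sector angle pi / k (near_one_in_cone). *)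
Definition sector_radius : R := sector_slope / (1 + sector_slope).

Let half_angle_gt0 : 0 < @pi R / k%:R / 2.
Proof. by rewrite !divr_gt0 ?pi_gt0 ?ltr0n // ltnW. Qed.

Let half_angle_lt_pihalf : @pi R / k%:R / 2 < pi / 2.
Proof. by rewrite ltr_pM2r // ltr_pdivrMr ?ltr_pMr ?pi_gt0 ?ltr1n ?ltr0n // ltnW. Qed.

Let half_angle_gtNpihalf : - (@pi R / 2) < pi / k%:R / 2.
Proof. by rewrite (lt_trans _ half_angle_gt0) // oppr_lt0 divr_gt0 ?pi_gt0. Qed.

Lemma sector_slope_gt0 : 0 < sector_slope.
Proof.
rewrite /sector_slope /tan divr_gt0 // ?sin_gt0_pihalf ?cos_gt0_pihalf //.
  by rewrite half_angle_gt0.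
by rewrite half_angle_gtNpihalf.
Qed.

Lemma atan_sector_slope : atan sector_slope = pi / k%:R / 2.
Proof. by rewrite /sector_slope tanK // in_itv /= half_angle_gtNpihalf. Qed.

Lemma sector_radius_gt0 : 0 < sector_radius.
Proof. by rewrite divr_gt0 ?addr_gt0 ?sector_slope_gt0. Qed.

Lemma angle_in_sector (l : nat) (phi : R) : (l < k)%N -> `|phi| <= pi / k%:R / 2 ->
  let t := (2 * l%:R + 1) * (pi / k%:R) + phi in
  0 <= t < 2%:R * pi /\ 2%:R * pi * l%:R / k%:R <= t < 2%:R * pi * l.+1%:R / k%:R.
Proof.
move=> l_lt_k; set q := pi / k%:R; rewrite ler_norml => /andP[phi_lo phi_hi] t.
have k_gt0 : 0 < k%:R :> R by rewrite ltr0n ltnW.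
have q_gt0 : 0 < q by rewrite divr_gt0 ?pi_gt0.
have piE : pi = q * k%:R by rewrite /q divfK // gt_eqF.
have l_bound : l%:R + 1 <= k%:R :> R by rewrite natr1 ler_nat.
have l_ge0 : 0 <= l%:R :> R := ler0n _ _.
have -> : 2%:R * pi * l%:R / k%:R = 2 * l%:R * q by rewrite /q; ring.
have -> : 2%:R * pi * l.+1%:R / k%:R = 2 * (l%:R + 1) * q by rewrite /q -natr1; ring.
rewrite {}/t piE; split; apply/andP; split; nra.
Qed.

Lemma P_rel_near_sector_center (l : nat) (e : R[i]) : (l < k)%N ->
  `|e| < sector_radius%:C -> P_rel k (sector_center l + e) (eps R k ^+ l).
Proof.
move=> l_lt_k e_small; pose tc : R := (2 * l%:R + 1) * (pi / k%:R).
have unrotate : sector_center l * cis (- tc) = 1 by rewrite -cisD subrr cis0.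
(* Rotate by -tc so that the centre moves to 1. *)
case wE : ((sector_center l + e) * cis (- tc)) => [a b].
have zE : sector_center l + e = (a +i* b) * cis tc.
  by rewrite -wE -mulrA -cisD addNr cis0 mulr1.
have w_near : (a - 1) ^+ 2 + b ^+ 2 < sector_radius ^+ 2.
  rewrite -normc_lt ?sector_radius_gt0 //.
  have -> : (a - 1) +i* b = a +i* b - 1 by apply/eqP; rewrite eq_complex /= oppr0 addr0 !eqxx.
  by rewrite -wE mulrDl unrotate addrC addKr normrM normr_cis mulr1.
have [a_gt0 b_le] := near_one_in_cone sector_slope_gt0 w_near.
set phi := atan (b / a).
have phi_small : `|phi| <= pi / k%:R / 2.
  have : `|b / a| <= sector_slope.
    by rewrite normrM normfV (gtr0_norm a_gt0) ler_pdivrMr // mulrC.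
  rewrite -atan_sector_slope !ler_norml -atanN => /andP[lo hi].
  by apply/andP; split; apply: le_atan.
have [t_range t_sector] := angle_in_sector l_lt_k phi_small.
have normE : `|sector_center l + e| = `|a +i* b| by rewrite zE normrM normr_cis mulr1.
split; first by rewrite -normr_eq0 normE normr_eq0 eq_complex /= negb_and gt_eqF.
exists (tc + phi), l; split=> //; split; last by split.
split=> //.
by rewrite normE zE {1}(polar_Re_gt0 b a_gt0) -mulrA -cisD [phi + tc]addrC.
Qed.

Lemma P_rel_on_disc (z p : R[i]) : P_rel k z p ->
  exists c, forall e, `|e| < sector_radius%:C -> P_rel k (c + e) p.
Proof.
move=> [_ [_ [l [l_lt_k [_ [_ ->]]]]]].
by exists (sector_center l) => e; exact: P_rel_near_sector_center.
Qed.

End Sectors.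

Section Bicomplex.
Variable R : realType.

(* comp1 and comp2 are the evaluations at the two square roots -i and i of -1,
   hence multiplicative. *)
Definition bc_comp (u : R[i]) (Z : BC R) : R[i] := Z.1 + u * Z.2.

Lemma comp1E (Z : BC R) : comp1 Z = bc_comp (- 'i) Z.
Proof. by rewrite /comp1 /bc_comp mulNr. Qed.

Lemma bc_comp_weighted_sum (u : R[i]) (n : nat) (w0 : BC R) (w x : 'I_n -> BC R) :
  u ^+ 2 = -1 ->
  bc_comp u (weighted_sum w0 w x) = bc_comp u w0 + \sum_(l < n) bc_comp u (w l) * bc_comp u (x l).
Proof.
move=> u_sqr.
have compD Z W : bc_comp u (bc_add Z W) = bc_comp u Z + bc_comp u W.
  by rewrite /bc_comp /=; ring.
have comp0 : bc_comp u (bc_zero R) = 0 by rewrite /bc_comp /= mulr0 addr0.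
have compM Z W : bc_comp u (bc_mul Z W) = bc_comp u Z * bc_comp u W.
  have -> : bc_comp u Z * bc_comp u W = Z.1 * W.1 + u ^+ 2 * (Z.2 * W.2) + u * (Z.1 * W.2 + Z.2 * W.1).
    by rewrite /bc_comp; ring.
  by rewrite u_sqr /bc_comp /=; ring.
rewrite /weighted_sum compD (big_morph _ compD comp0).
by under eq_bigr do rewrite compM.
Qed.

Lemma comp1_weighted_sum (n : nat) (w0 : BC R) (w x : 'I_n -> BC R) :
  comp1 (weighted_sum w0 w x) = comp1 w0 + \sum_(l < n) comp1 (w l) * comp1 (x l).
Proof.
rewrite !comp1E bc_comp_weighted_sum ?sqrrN ?sqr_i //.
by congr (_ + _); apply: eq_bigr => l _; rewrite !comp1E.
Qed.

Lemma comp2_weighted_sum (n : nat) (w0 : BC R) (w x : 'I_n -> BC R) :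
  comp2 (weighted_sum w0 w x) = comp2 w0 + \sum_(l < n) comp2 (w l) * comp2 (x l).
Proof. exact/bc_comp_weighted_sum/sqr_i. Qed.

Lemma comp1_bc_of_idem (a b : R[i]) : comp1 (bc_of_idem a b) = a.
Proof. by rewrite /comp1 /bc_of_idem /= !mulrA -expr2 sqr_i; field. Qed.

Lemma comp2_bc_of_idem (a b : R[i]) : comp2 (bc_of_idem a b) = b.
Proof. by rewrite /comp2 /bc_of_idem /= !mulrA -expr2 sqr_i; field. Qed.

Lemma weighted_sum_zero_weights (n : nat) (w0 : BC R) (x : 'I_n -> BC R) :
  weighted_sum w0 (fun=> bc_zero R) x = w0.
Proof.
have sum0 : \big[@bc_add R/bc_zero R]_(l < n) bc_mul (bc_zero R) (x l) = bc_zero R.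
  apply: (big_rec (fun Z => Z = bc_zero R)) => // l Z _ ->.
  by rewrite /bc_add /bc_mul /= !mul0r subr0 !addr0.
by rewrite /weighted_sum sum0; case: w0 => a b; rewrite /bc_add /= !addr0.
Qed.

Lemma calP_rel_functional (k : nat) (Z V V' : BC R) : (0 < k)%N ->
  calP_rel k Z V -> calP_rel k Z V' -> V = V'.
Proof.
move=> k_gt0 [p1 [p2 [P1 [P2 ->]]]] [q1 [q2 [Q1 [Q2 ->]]]].
by rewrite (P_rel_functional k_gt0 P1 Q1) (P_rel_functional k_gt0 P2 Q2).
Qed.

Lemma small_weights_sum (n : nat) (M r : R) : 0 < r ->
  exists2 delta : R, 0 < delta & forall u v : 'I_n -> R[i],
    (forall l, `|u l| < delta%:C) -> (forall l, `|v l| <= M%:C) ->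
    `|\sum_l u l * v l| < r%:C.
Proof.
move=> r_gt0; set D := n%:R * `|M| + 1.
have D_gt0 : 0 < D by rewrite ltr_pwDr // mulr_ge0.
exists (r / D) => [|u v u_small v_bounded]; first exact: divr_gt0.
apply: (le_lt_trans (ler_norm_sum _ _ _)).
apply: (@le_lt_trans _ _ (\sum_(l < n) (r / D * `|M|)%:C)).
  apply: ler_sum => l _; rewrite normrM rmorphM /=.
  apply: ler_pM => //; first exact: ltW.
  by apply: le_trans (v_bounded l) _; rewrite lecR ler_norm.
rewrite sumr_const card_ord -rmorphMn ltcR -mulr_natl.
have -> : n%:R * (r / D * `|M|) = r * (n%:R * `|M|) / D by ring.
by rewrite ltr_pdivrMr // ltr_pM2l // /D ltrDl.
Qed.

End Bicomplex.

Theorem mainTheorem1 (R : realType) (k n : nat)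
    (T : ('I_n -> BC R) -> Prop) (f : ('I_n -> BC R) -> BC R) (w0 : BC R) :
  (2 <= k)%N ->
  bc_bounded T ->
  is_weighting_vector k T f w0 (fun _ => bc_zero R) ->
  exists (w0' : BC R) (delta : R), 0 < delta /\
    forall w : 'I_n -> BC R,
      (forall l : 'I_n, `|comp1 (w l)| < delta%:C /\ `|comp2 (w l)| < delta%:C) ->
      is_weighting_vector k T f w0' w.
Proof.
move=> k_ge2 [M T_bounded] f_weights.
have {}f_weights x : T x -> calP_rel k w0 (f x).
  by move=> Tx; rewrite -(weighted_sum_zero_weights w0 x); exact: f_weights.
have [[x0 Tx0]|T_empty] := pselect (exists x, T x); last first.
  by exists w0, 1; split=> // w _ x Tx; case: T_empty; exists x.
have [p1 [p2 [P1 [P2 f_x0]]]] := f_weights x0 Tx0.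
have [c1 disc1] := P_rel_on_disc k_ge2 P1.
have [c2 disc2] := P_rel_on_disc k_ge2 P2.
have [delta delta_gt0 sum_small] := small_weights_sum n M (sector_radius_gt0 R k_ge2).
exists (bc_of_idem c1 c2), delta; split=> // w w_small x Tx.
rewrite (calP_rel_functional (ltnW k_ge2) (f_weights x Tx) (f_weights x0 Tx0)) f_x0.
exists p1, p2; split; last split=> //.
- rewrite comp1_weighted_sum comp1_bc_of_idem; apply/disc1/sum_small => l.
  + by case: (w_small l).
  + by case: (T_bounded x Tx l).
- rewrite comp2_weighted_sum comp2_bc_of_idem; apply/disc2/sum_small => l.
  + by case: (w_small l).
  + by case: (T_bounded x Tx l).
Qed.
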